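(* Suppose $n$ is even, $n_t=n_c=n/2$, and the assignment $W$ is generated by pair-switching rerandomization (PSRR) with threshold $a>0$ and tuning parameter $\gamma\ge0$ (assumed to terminate almost surely). Then the difference-in-means estimator $\widehat\tau=n_t^{-1}\sum_{i:W_i=1}Y_i(1)-n_c^{-1}\sum_{i:W_i=0}Y_i(0)$ satisfies $E(\widehat\tau)=\tau$, where $\tau=n^{-1}\sum_{i=1}^n\{Y_i(1)-Y_i(0)\}$.
   Context: Units $i=1,\dots,n$ have fixed potential outcomes $Y_i(1),Y_i(0)$ and fixed covariates $X_i\in\mathbb R^p$, with sample covariance $S_{XX}=(n-1)^{-1}\sum_i(X_i-\overline X)(X_i-\overline X)^{\mathrm T}$ invertible. Expectation is over the randomness of the design only. For an assignment $W\in\{0,1\}^n$ with $n_t$ ones, $M(W)=n_t(1-n_t/n)(\overline X_t-\overline X_c)^{\mathrm T}S_{XX}^{-1}(\overline X_t-\overline X_c)$ with $\overline X_t=n_t^{-1}\sum_{i:W_i=1}X_i$, $\overline X_c=n_c^{-1}\sum_{i:W_i=0}X_i$. PSRR: draw $W^{(0)}$ uniformly among assignments with $n_t$ ones; set $t=0$, $M^{(0)}=M(W^{(0)})$. While $M^{(t)}>a$: choose uniformly at random one index $i$ with $W^{(t)}_i=1$ and one index $j$ with $W^{(t)}_j=0$, let $W^*$ be $W^{(t)}$ with entries $i,j$ swapped, $M^*=M(W^* )$; with probability $\min\{(M^{(t)}/M^* )^\gamma,1\}$ set $W^{(t+1)}=W^*$, $M^{(t+1)}=M^*$, $t\leftarrow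 t+1$ (otherwise keep the current state and try again). Output $W=W^{(t)}$ once $M^{(t)}\le a$. *)

From HB Require Import structures.
From mathcomp Require Import all_boot all_order all_algebra.
From mathcomp Require Import all_classical all_reals all_analysis.
Set Implicit Arguments. Unset Strict Implicit. Unset Printing Implicit Defensive.
Import Order.TTheory GRing.Theory Num.Theory.
Import numFieldNormedType.Exports.
Local Open Scope classical_set_scope.
Local Open Scope ring_scope.

(* An assignment W in {0,1}^n : W i = true means unit i is treated. *)
Definition assign (n : nat) := {ffun 'I_n -> bool}.

Definition ntreat n (w : assign n) : nat := #|[pred i | w i]|.

Section PSRR.
Variables (R : realType) (n p : nat).
Variable X : 'I_n -> 'rV[R]_p.

Definition Xbar : 'rV[R]_p := n%:R^-1 *: \sum_(i < n) X i.

Definition SXX : 'M[R]_p :=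
  (n.-1)%:R^-1 *: \sum_(i < n) ((X i - Xbar)^T *m (X i - Xbar)).

Definition Xt (w : assign n) : 'rV[R]_p :=
  (ntreat w)%:R^-1 *: \sum_(i < n | w i) X i.
Definition Xc (w : assign n) : 'rV[R]_p :=
  (n - ntreat w)%:R^-1 *: \sum_(i < n | ~~ w i) X i.

Definition mahal (w : assign n) : R :=
  let nt := (ntreat w)%:R in
  nt * (1 - nt / n%:R) *
  ((Xt w - Xc w) *m invmx SXX *m (Xt w - Xc w)^T) 0 0.

Definition swap (w : assign n) (i j : 'I_n) : assign n :=
  [ffun k => if k == i then w j else if k == j then w i else w k].

(* acceptance probability min{(m/ms)^gamma, 1} with ms = M(Wstar); when ms <= m the ratio is
   >= 1 (or +infinity if ms = 0) and the probability is 1. *)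
Definition accept (gamma m mstar : R) : R :=
  if mstar <= m then 1 else powR (m / mstar) gamma.

(* one-try transition kernel of PSRR: from a state w with M(w) <= a the
   algorithm has stopped (absorbing); otherwise a pair (i, j) with w i = 1,
   w j = 0 is chosen uniformly and the swap is accepted with probability
   accept, otherwise the state is kept. *)
Definition kernel (a gamma : R) (w w' : assign n) : R :=
  if mahal w <= a then (w' == w)%:R
  else
    \sum_(i < n | w i) \sum_(j < n | ~~ w j)
      ((ntreat w)%:R * (n - ntreat w)%:R)^-1 *
      (accept gamma (mahal w) (mahal (swap w i j)) * (w' == swap w i j)%:R
       + (1 - accept gamma (mahal w) (mahal (swap w i j))) * (w' == w)%:R).

Definition init_dist (nt : nat) (w : assign n) : R :=
  if ntreat w == nt then #|[pred v : assign n | ntreat v == nt]|%:R^-1 else 0.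

Fixpoint psrr_dist (nt : nat) (a gamma : R) (k : nat) (w : assign n) : R :=
  match k with
  | 0 => init_dist nt w
  | k'.+1 => \sum_(v : assign n) psrr_dist nt a gamma k' v * kernel a gamma v w
  end.

Definition psrr_stop_prob (nt : nat) (a gamma : R) (k : nat) : R :=
  \sum_(w : assign n | mahal w <= a) psrr_dist nt a gamma k w.

Definition psrr_out (nt : nat) (a gamma : R) (w : assign n) : R :=
  if mahal w <= a then lim (psrr_dist nt a gamma k w @[k --> \oo]) else 0.

End PSRR.

Definition tauhat (R : realType) n (Y1 Y0 : 'I_n -> R) (w : assign n) : R :=
  (ntreat w)%:R^-1 * \sum_(i < n | w i) Y1 i
  - (n - ntreat w)%:R^-1 * \sum_(i < n | ~~ w i) Y0 i.

Definition tau (R : realType) n (Y1 Y0 : 'I_n -> R) : R :=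
  n%:R^-1 * \sum_(i < n) (Y1 i - Y0 i).

(* The proof is a symmetry argument.  Let compl flip every treatment label.
   Since n_t = n_c, compl preserves the Mahalanobis distance M, maps the
   uniform start to itself, and commutes with the PSRR kernel (a switch of a
   treated i with a control j from W is the switch of j with i from compl W).
   Hence the law of the state after k tries is compl-invariant, and so is its
   restriction to stopped states (M <= a).  For any compl-invariant weighting
   D supported on balanced assignments, each unit is treated with exactly half
   of the total weight, whence sum_W D(W) tauhat(W) = (sum_W D(W)) tau. *)

From Pilot Require Import Defs.
From HB Require Import structures.
From mathcomp Require Import all_boot all_order all_algebra perm.
From mathcomp Require Import all_classical all_reals all_analysis.
From mathcomp Require Import zify ring.
Import Order.TTheory GRing.Theory Num.Theory.
Import numFieldNormedType.Exports.
Local Open Scope classical_set_scope.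
Local Open Scope ring_scope.
Set Implicit Arguments. Unset Strict Implicit.

Section Complement.
Variables (R : realType) (n p : nat) (X : 'I_n -> 'rV[R]_p).
Hypothesis n_gt0 : (0 < n)%N.

Definition compl (w : assign n) : assign n := [ffun i => ~~ w i].

Lemma complE (w : assign n) i : compl w i = ~~ w i.
Proof. by rewrite ffunE. Qed.

Lemma complK : involutive compl.
Proof. by move=> w; apply/ffunP => i; rewrite !complE negbK. Qed.

Lemma compl_inj : injective compl.
Proof. exact: inv_inj complK. Qed.

Lemma ntreat_le (w : assign n) : (ntreat w <= n)%N.
Proof. by rewrite /ntreat -[X in (_ <= X)%N]card_ord max_card. Qed.

Lemma ntreat_compl (w : assign n) : ntreat (compl w) = (n - ntreat w)%N.
Proof.
have cardCw := cardC [pred i | w i]; rewrite card_ord in cardCw.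
rewrite /ntreat -[X in _ = (X - _)%N]cardCw addKn.
by apply: eq_card => i; rewrite !inE complE.
Qed.

Lemma Xt_compl (w : assign n) : Xt X (compl w) = Xc X w.
Proof.
rewrite /Xt /Xc ntreat_compl; congr (_ *: _).
by apply: eq_bigl => i; rewrite complE.
Qed.

Lemma Xc_compl (w : assign n) : Xc X (compl w) = Xt X w.
Proof. by rewrite -[in RHS](complK w) Xt_compl. Qed.

Lemma mahal_compl (w : assign n) : mahal X (compl w) = mahal X w.
Proof.
rewrite /mahal Xt_compl Xc_compl ntreat_compl natrB ?ntreat_le //.
rewrite -[Xc X w - _]opprB linearN /= !mulmxN !mulNmx opprK.
have n0 : (n%:R : R) != 0 by rewrite pnatr_eq0 -lt0n.
by congr (_ * _); field; rewrite n0.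
Qed.

Lemma swapE (w : assign n) i j k : swap w i j k = w (tperm i j k).
Proof.
rewrite ffunE; case: tpermP => [->|->|/eqP/negbTE -> /eqP/negbTE -> //].
  by rewrite eqxx.
by case: eqVneq => [->|_]; rewrite ?eqxx.
Qed.

Lemma swapC (w : assign n) i j : swap w i j = swap w j i.
Proof. by apply/ffunP => k; rewrite !swapE tpermC. Qed.

Lemma swap_compl (w : assign n) i j : swap (compl w) i j = compl (swap w i j).
Proof. by apply/ffunP => k; rewrite swapE !complE swapE. Qed.

Lemma ntreat_swap (w : assign n) i j : ntreat (swap w i j) = ntreat w.
Proof.
rewrite /ntreat -!sum1_card (reindex_inj (@perm_inj _ (tperm i j))).
by apply: eq_bigl => k; rewrite !inE swapE tpermK.
Qed.

End Complement.

Section Kernel.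
Variables (R : realType) (n p : nat) (X : 'I_n -> 'rV[R]_p) (a gamma : R).
Hypothesis n_gt0 : (0 < n)%N.
Hypothesis a_gt0 : 0 < a.
Hypothesis gamma_ge0 : 0 <= gamma.

Definition switch_mass (v w s : assign n) : R :=
  ((ntreat v)%:R * (n - ntreat v)%:R)^-1 *
  (accept gamma (mahal X v) (mahal X s) * (w == s)%:R
   + (1 - accept gamma (mahal X v) (mahal X s)) * (w == v)%:R).

Lemma kernel_stopped (v w : assign n) : mahal X v <= a ->
  Defs.kernel X a gamma v w = (w == v)%:R.
Proof. by move=> stop_v; rewrite /Defs.kernel stop_v. Qed.

Lemma kernel_running (v w : assign n) : ~~ (mahal X v <= a) ->
  Defs.kernel X a gamma v w =
  \sum_(i | v i) \sum_(j | ~~ v j) switch_mass v w (swap v i j).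
Proof. by move=> run_v; rewrite /Defs.kernel (negbTE run_v). Qed.

Lemma switch_mass_compl (v w s : assign n) :
  switch_mass (compl v) (compl w) (compl s) = switch_mass v w s.
Proof.
rewrite /switch_mass !(inj_eq (@compl_inj n)) !mahal_compl // ntreat_compl.
by rewrite subKn ?ntreat_le // [c in c^-1]mulrC.
Qed.

(* The PSRR kernel commutes with complementation: a try from compl v picks a
   treated i and a control j, which is a try from v picking j and i. *)
Lemma kernel_compl (v w : assign n) :
  Defs.kernel X a gamma (compl v) (compl w) = Defs.kernel X a gamma v w.
Proof.
have [stop_v|run_v] := boolP (mahal X v <= a).
  by rewrite !kernel_stopped ?mahal_compl // (inj_eq (@compl_inj n)).
rewrite !kernel_running ?mahal_compl // exchange_big /=.
apply: eq_big => [j|j _]; first by rewrite complE negbK.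
apply: eq_big => [i|i _]; first by rewrite complE.
by rewrite swap_compl switch_mass_compl swapC.
Qed.

Lemma accept_in01 (M Mnew : R) : 0 < M -> 0 <= accept gamma M Mnew <= 1.
Proof.
move=> M_gt0; rewrite /accept; case: ifPn => [_|]; first by rewrite ler01 lexx.
rewrite -ltNge => M_lt_Mnew.
have Mnew_gt0 : 0 < Mnew := lt_trans M_gt0 M_lt_Mnew.
have ratio01 : 0 < M / Mnew <= 1.
  by rewrite divr_gt0 //= ler_pdivrMr // mul1r ltW.
by rewrite powR_ge0 /= -(powRr0 (M / Mnew)) ger_powR.
Qed.

Lemma kernel_ge0 (v w : assign n) : 0 <= Defs.kernel X a gamma v w.
Proof.
have [stop_v|run_v] := boolP (mahal X v <= a); first by rewrite kernel_stopped.
have M_gt0 : 0 < mahal X v by rewrite (lt_trans a_gt0) // ltNge.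
rewrite kernel_running //; apply: sumr_ge0 => i _; apply: sumr_ge0 => j _.
have /andP[acc_ge0 acc_le1] := accept_in01 (mahal X (swap v i j)) M_gt0.
rewrite /switch_mass mulr_ge0 ?invr_ge0 ?mulr_ge0 //.
by rewrite addr_ge0 // mulr_ge0 ?subr_ge0.
Qed.

End Kernel.

Section Distribution.
Variables (R : realType) (n p : nat) (X : 'I_n -> 'rV[R]_p) (a gamma : R).
Hypothesis n_gt0 : (0 < n)%N.
Hypothesis a_gt0 : 0 < a.
Hypothesis gamma_ge0 : 0 <= gamma.
Variable m : nat.

Local Notation dist := (psrr_dist X m a gamma).

Lemma dist_ge0 k (w : assign n) : 0 <= dist k w.
Proof.
elim: k w => [|k IH] w /=; first by rewrite /init_dist; case: ifP.
by apply: sumr_ge0 => v _; rewrite mulr_ge0 ?kernel_ge0.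
Qed.

(* Pair switches preserve the number of treated units, so the state always
   has exactly m treated units. *)
Lemma dist_supp k (w : assign n) : ntreat w != m -> dist k w = 0.
Proof.
elim: k w => [|k IH] w w_m /=; first by rewrite /init_dist (negbTE w_m).
apply: big1 => v _; have [v_m|/IH->] := eqVneq (ntreat v) m; last by rewrite mul0r.
have w_neq_v : (w == v) = false by apply: contraNF w_m => /eqP->; rewrite v_m.
have [stop_v|run_v] := boolP (mahal X v <= a).
  by rewrite kernel_stopped // w_neq_v mulr0.
rewrite kernel_running // big1 ?mulr0 // => i _; rewrite big1 // => j _.
have w_neq_s : (w == swap v i j) = false.
  by apply: contraNF w_m => /eqP->; rewrite ntreat_swap v_m.
by rewrite /switch_mass w_neq_s w_neq_v !mulr0 addr0 mulr0.
Qed.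

(* A stopped state keeps its mass, so its probability only grows. *)
Lemma dist_stopped_incr k (w : assign n) : mahal X w <= a -> dist k w <= dist k.+1 w.
Proof.
move=> stop_w /=; rewrite (bigD1 w) // kernel_stopped // eqxx mulr1 lerDl.
by apply: sumr_ge0 => v _; rewrite mulr_ge0 ?kernel_ge0 ?dist_ge0.
Qed.

Lemma dist_le_stop_prob k (w : assign n) : mahal X w <= a ->
  dist k w <= psrr_stop_prob X m a gamma k.
Proof.
move=> stop_w; rewrite /psrr_stop_prob (bigD1 w) //= lerDl.
by apply: sumr_ge0 => v _; exact: dist_ge0.
Qed.

Lemma stop_prob_incr : nondecreasing_seq (psrr_stop_prob X m a gamma).
Proof.
apply/nondecreasing_seqP => k; apply: ler_sum => w stop_w.
exact: dist_stopped_incr.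
Qed.

Hypothesis n_balanced : n = (m + m)%N.

Lemma init_compl (w : assign n) : init_dist R m (compl w) = init_dist R m w.
Proof.
rewrite /init_dist ntreat_compl; congr (if _ then _ else _).
by apply/eqP/eqP; have := ntreat_le w; lia.
Qed.

Lemma dist_compl k (w : assign n) : dist k (compl w) = dist k w.
Proof.
elim: k w => [|k IH] w /=; first exact: init_compl.
rewrite (reindex_inj (@compl_inj n)); apply: eq_bigr => v _.
by rewrite IH kernel_compl.
Qed.

End Distribution.

Section SymmetricMean.
Variables (R : realType) (n m : nat) (Y1 Y0 : 'I_n -> R).
Hypothesis m_gt0 : (0 < m)%N.
Hypothesis n_balanced : n = (m + m)%N.

Lemma tauhat_balanced (w : assign n) : ntreat w = m ->
  tauhat Y1 Y0 w = m%:R^-1 * \sum_i ((w i)%:R * Y1 i - (~~ w i)%:R * Y0 i).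
Proof.
move=> w_m; rewrite /tauhat w_m.
have -> : (n - m)%N = m by rewrite n_balanced addnK.
rewrite -mulrBr sumrB !(big_mkcond (fun i => w i)) (big_mkcond (fun i => ~~ w i)) /=.
by congr (_ * (_ - _)); apply: eq_bigr => i _; case: (w i); rewrite ?mul1r ?mul0r.
Qed.

Lemma control_mass_eq_treated (D : assign n -> R) i :
  (forall w, D (compl w) = D w) ->
  \sum_w D w * (~~ w i)%:R = \sum_w D w * (w i)%:R.
Proof.
move=> D_compl; rewrite (reindex_inj (@compl_inj n)); apply: eq_bigr => w _.
by rewrite D_compl complE negbK.
Qed.

Lemma treated_mass_half (D : assign n -> R) i :
  (forall w, D (compl w) = D w) ->
  \sum_w D w * (w i)%:R = (\sum_w D w) / 2.
Proof.
move=> D_compl.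
have split_mass : \sum_w D w = \sum_w D w * (w i)%:R + \sum_w D w * (~~ w i)%:R.
  rewrite -big_split; apply: eq_bigr => w _.
  by case: (w i); rewrite /= ?mulr1 ?mulr0 ?addr0 ?add0r.
by rewrite split_mass control_mass_eq_treated //; field.
Qed.

Lemma symmetric_mean_tauhat (D : assign n -> R) :
  (forall w, D (compl w) = D w) -> (forall w, ntreat w != m -> D w = 0) ->
  \sum_w D w * tauhat Y1 Y0 w = (\sum_w D w) * tau Y1 Y0.
Proof.
move=> D_compl D_supp.
pose unit_term (w : assign n) i := (w i)%:R * Y1 i - (~~ w i)%:R * Y0 i.
have per_assignment w : D w * tauhat Y1 Y0 w = m%:R^-1 * \sum_i D w * unit_term w i.
  have [w_m|/D_supp->] := eqVneq (ntreat w) m; last first.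
    by rewrite mul0r big1 ?mulr0 // => i; rewrite mul0r.
  by rewrite tauhat_balanced // mulrCA mulr_sumr.
have per_unit i : \sum_w D w * unit_term w i = (Y1 i - Y0 i) * ((\sum_w D w) / 2).
  rewrite mulrBl -(treated_mass_half i D_compl).
  rewrite -[t in _ - Y0 i * t]control_mass_eq_treated //.
  rewrite !mulr_sumr -sumrB.
  by apply: eq_bigr => w _; rewrite /unit_term; ring.
rewrite (eq_bigr _ (fun w _ => per_assignment w)) -mulr_sumr exchange_big /=.
rewrite (eq_bigr _ (fun i _ => per_unit i)) -mulr_suml /tau.
have -> : (n%:R : R) = m%:R + m%:R by rewrite n_balanced natrD.
have m0 : (m%:R : R) != 0 by rewrite pnatr_eq0 -lt0n.
by field; rewrite -mulr2n mulrn_eq0 m0.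
Qed.

End SymmetricMean.

Section Output.
Variables (R : realType) (n p : nat) (X : 'I_n -> 'rV[R]_p) (a gamma : R) (m : nat).
Hypothesis a_gt0 : 0 < a.
Hypothesis gamma_ge0 : 0 <= gamma.

Local Notation dist := (psrr_dist X m a gamma).
Local Notation stop_prob := (psrr_stop_prob X m a gamma).

(* Law of the state after k tries restricted to stopped states, i.e. the
   sub-probability "PSRR has output w within k tries". *)
Definition stopped_dist k (w : assign n) : R :=
  if mahal X w <= a then dist k w else 0.

Lemma stopped_dist_sum k : \sum_w stopped_dist k w = stop_prob k.
Proof. by rewrite /psrr_stop_prob [RHS]big_mkcond. Qed.

Lemma stopped_dist_supp k (w : assign n) : ntreat w != m -> stopped_dist k w = 0.
Proof. by move=> w_m; rewrite /stopped_dist dist_supp // if_same. Qed.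

Lemma stopped_dist_compl (n_gt0 : (0 < n)%N) (n_balanced : n = (m + m)%N)
    k (w : assign n) :
  stopped_dist k (compl w) = stopped_dist k w.
Proof. by rewrite /stopped_dist mahal_compl // dist_compl. Qed.

(* If the stopping probabilities converge, then so does the mass of every
   stopped state (it is nondecreasing and bounded), towards the output law. *)
Hypothesis stop_prob_cvg : cvgn stop_prob.

Lemma stopped_dist_cvg (w : assign n) :
  stopped_dist k w @[k --> \oo] --> psrr_out X m a gamma w.
Proof.
rewrite /stopped_dist /psrr_out; case: ifPn => [stop_w|_]; last exact: cvg_cst.
apply: nondecreasing_is_cvgn.
  by apply/nondecreasing_seqP => k; exact: dist_stopped_incr.
exists (limn stop_prob) => _ [k _ <-].
apply: le_trans (dist_le_stop_prob a_gt0 gamma_ge0 m k stop_w) _.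
exact: nondecreasing_cvgn_le (stop_prob_incr X a_gt0 gamma_ge0 m) stop_prob_cvg k.
Qed.

Lemma expectation_stopped_cvg (f : assign n -> R) :
  \sum_w stopped_dist k w * f w @[k --> \oo] --> \sum_w psrr_out X m a gamma w * f w.
Proof.
apply: cvg_big; first exact: add_continuous.
by move=> w _; apply: cvgM; [exact: stopped_dist_cvg | exact: cvg_cst].
Qed.

End Output.

Theorem theorem2 (R : realType) (n p : nat) (X : 'I_n -> 'rV[R]_p)
    (Y1 Y0 : 'I_n -> R) (a gamma : R) :
  (0 < n)%N -> ~~ odd n ->
  SXX X \in unitmx ->
  0 < a -> 0 <= gamma ->
  (* PSRR terminates almost surely *)
  psrr_stop_prob X n./2 a gamma k @[k --> \oo] --> (1 : R) ->
  \sum_(w : assign n) psrr_out X n./2 a gamma w * tauhat Y1 Y0 w = tau Y1 Y0.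
Proof.
move=> n_gt0 n_even _ a_gt0 gamma_ge0 stop_cvg1.
set m := n./2.
have n_balanced : n = (m + m)%N.
  by rewrite addnn -[LHS]odd_double_half (negbTE n_even).
have m_gt0 : (0 < m)%N by move: n_gt0; rewrite n_balanced addnn double_gt0.
have truncated_mean k : \sum_w stopped_dist X a gamma m k w * tauhat Y1 Y0 w
                        = psrr_stop_prob X m a gamma k * tau Y1 Y0.
  rewrite (symmetric_mean_tauhat _ _ m_gt0 n_balanced) ?stopped_dist_sum // => w.
    exact: stopped_dist_compl.
  exact: stopped_dist_supp.
have to_output :=
  expectation_stopped_cvg a_gt0 gamma_ge0 (cvgP _ stop_cvg1) (f := tauhat Y1 Y0).
have to_tau : \sum_w stopped_dist X a gamma m k w * tauhat Y1 Y0 w @[k --> \oo]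
               --> tau Y1 Y0.
  rewrite (funext truncated_mean) -[t in _ --> t]mul1r.
  by apply: cvgM => //; exact: cvg_cst.
exact: cvg_unique to_output to_tau.
Qed.
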